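(* Let $d=2$, $n=1$, and let $\mathcal{M}=\{\mathcal{M}_0,\mathcal{M}_1\}$ be a single-qubit instrument with generalized Pauli fidelities $\tilde\nu_{s,t}$, where $\tilde\nu_{0,1}\neq0$ and $\tilde\nu_{1,0}\neq 0$. Let $r=\tilde\nu_{1,0}/\tilde\nu_{0,1}$ and define the linear map $\mathcal{B}$ on $2\times2$ matrices by $$\mathcal{B}(I)=I,\quad \mathcal{B}(X)=X,\quad \mathcal{B}(Y)=Y,\quad \mathcal{B}(Z)=rZ.$$ Define the transformed instrument $\mathcal{M}'_k=\mathcal{B}\circ\mathcal{M}_k\circ\mathcal{B}^{-1}$ and the transformed initial state $\rho'=\mathcal{B}(\rho)$. Then: 1. $\tilde\nu_{0,1}(\mathcal{M}')=\tilde\nu_{1,0}(\mathcal{M})$ and $\tilde\nu_{1,0}(\mathcal{M}')=\tilde\nu_{0,1}(\mathcal{M})$. 2. For every $m\ge1$ and every $\vec k\in\{0,1\}^m$, $$\operatorname{tr}\big(\hat{\mathcal{M}}'_{k_m}\circ\cdots\circ\hat{\mathcal{M}}'_{k_1}(\rho')\big)=\operatorname{tr}\big(\hat{\mathcal{M}}_{k_m}\circ\cdots\circ\hat{\mathcal{M}}_{k_1}(\rho)\big),$$ where hats denote randomly compiled instruments. That is, the outcome distribution of the instrument benchmarking routine under ideal gates is unchanged. Consequently, no choice of $\vec c$ in the estimators $\kappa(\vec c)=\operatorname{tr}(Z^{-c_1}\rho)\prod_j\tilde\nu_{c_j,c_{j+1}}$ can distinguish $\tilde\nu_{0,1}$ from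 $\tilde\nu_{1,0}$.
   Context: Here $X,Y,Z$ are the Pauli matrices and $I$ is the $2\times2$ identity. Let $\chi_z(j)=(-1)^{zj}$ for $z,j\in\{0,1\}$. A single-qubit instrument $\{\mathcal{M}_0,\mathcal{M}_1\}$ is a pair of completely positive trace-non-increasing maps whose sum is trace preserving. Its generalized Pauli fidelities are $$\tilde\nu_{s,t}(\mathcal{M})=\tfrac12\sum_{k\in\{0,1\}}\chi_k(s-t)\operatorname{tr}\big(Z^t\mathcal{M}_k(Z^s)\big),\qquad s,t\in\{0,1\},$$ and the definition is applied verbatim to any family of linear maps. The randomly compiled version of an instrument is $$\hat{\mathcal{M}}_k=\tfrac18\sum_{a,b,x\in\{0,1\}}\mathcal{X}^x\mathcal{Z}^a\mathcal{M}_{k+x}\mathcal{Z}^b\mathcal{X}^x,$$ where $\mathcal{X}(\rho)=X\rho X$, $\mathcal{Z}(\rho)=Z\rho Z$, and indices are taken mod 2. Under ideal gates, $\operatorname{tr}(\hat{\mathcal{M}}_{k_m}\circ\cdots\circ\hat{\mathcal{M}}_{k_1}(\rho))$ is the probability that the instrument benchmarking routine returns $\vec k$. *)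

From HB Require Import structures.
From mathcomp Require Import all_boot all_order all_algebra all_field.
Set Implicit Arguments. Unset Strict Implicit. Unset Printing Implicit Defensive.
Import Order.TTheory GRing.Theory Num.Theory.
Local Open Scope ring_scope.

Notation Mat := 'M[algC]_2.

Definition PX : Mat := \matrix_(i, j) (if i != j then 1 else 0).
Definition PY : Mat := \matrix_(i, j)
  (if (i == 0) && (j == 1) then - 'i else if (i == 1) && (j == 0) then 'i else 0).
Definition PZ : Mat := \matrix_(i, j)
  (if i == j then (if i == 0 then 1 else -1) else 0).

Definition Zpow (t : bool) : Mat := if t then PZ else 1%:M.

(* chi_z(j) = (-1)^(z j); for z in {0,1}, (-1)^(k(s-t)) = -1 iff k = 1 and s <> t *)
Definition chi (k : bool) (s t : bool) : algC := if k && (s != t) then -1 else 1.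

Definition linmap (f : Mat -> Mat) : Prop :=
  forall (a : algC) (A B : Mat), f (a *: A + B) = a *: f A + f B.

Definition psd (A : Mat) : Prop :=
  forall v : 'I_2 -> algC, 0 <= \sum_(i < 2) \sum_(j < 2) (v i)^* * A i j * v j.

Definition density (rho : Mat) : Prop := psd rho /\ \tr rho = 1.

(* complete positivity: the Choi matrix sum_{ij} E_ij (x) f(E_ij) is PSD,
   written out as a quadratic form on C^2 (x) C^2 *)
Definition completely_positive (f : Mat -> Mat) : Prop :=
  forall v : 'I_2 -> 'I_2 -> algC,
    0 <= \sum_(i1 < 2) \sum_(i2 < 2) \sum_(j1 < 2) \sum_(j2 < 2)
           (v i1 i2)^* * f (delta_mx i1 j1) i2 j2 * v j1 j2.

Definition trace_nonincreasing (f : Mat -> Mat) : Prop :=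
  forall A : Mat, psd A -> \tr (f A) <= \tr A.

(* single-qubit instrument {M_0, M_1} (indexed by bool: false = 0, true = 1) *)
Definition instrument (M : bool -> Mat -> Mat) : Prop :=
  (forall k, linmap (M k) /\ completely_positive (M k) /\ trace_nonincreasing (M k))
  /\ (forall A : Mat, \tr (M false A + M true A) = \tr A).

Definition gnu (M : bool -> Mat -> Mat) (s t : bool) : algC :=
  2^-1 * \sum_(k : bool) chi k s t * \tr (Zpow t *m M k (Zpow s)).

Definition chX (x : bool) (A : Mat) : Mat := if x then PX *m A *m PX else A.
Definition chZ (a : bool) (A : Mat) : Mat := if a then PZ *m A *m PZ else A.

(* randomly compiled instrument; index k + x mod 2 is addb k x *)
Definition rc (M : bool -> Mat -> Mat) (k : bool) (A : Mat) : Mat :=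
  8^-1 *: \sum_(a : bool) \sum_(b : bool) \sum_(x : bool)
     chX x (chZ a (M (addb k x) (chZ b (chX x A)))).

(* hat M_{k_m} o ... o hat M_{k_1} (rho): k_1 is applied first *)
Definition run (M : bool -> Mat -> Mat) (rho : Mat) (ks : seq bool) : Mat :=
  foldl (fun A k => rc M k A) rho ks.

(* B only rescales the Z-component of the Pauli expansion, so it commutes with
   the Pauli twirls X.X and Z.Z used in random compilation and preserves the
   trace.  Hence compiling the conjugated instrument B M_k B^-1 is the same as
   conjugating the compiled instrument, the benchmarking run started from B rho
   is B applied to the original run, and the outcome probabilities (traces)
   agree.  The fidelities nu_{0,1} and nu_{1,0} read off the Z-component of an
   output and of an input respectively, so conjugation multiplies them by r and
   r^-1, which swaps them for r = nu_{1,0} / nu_{0,1}. *)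
From HB Require Import structures.
From mathcomp Require Import all_boot all_order all_algebra all_field.
From mathcomp Require Import ring.
Set Implicit Arguments. Unset Strict Implicit. Unset Printing Implicit Defensive.
Import Order.TTheory GRing.Theory Num.Theory.
Local Open Scope ring_scope.

Section LinearMaps.
Variable L : Mat -> Mat.
Hypothesis linL : linmap L.

Lemma linmap0 : L 0 = 0.
Proof.
have := linL 1 0 0; rewrite !addr0 !scale1r => h.
by apply: (addrI (L 0)); rewrite addr0 -h.
Qed.

Lemma linmapZ a A : L (a *: A) = a *: L A.
Proof. by have := linL a A 0; rewrite !addr0 linmap0 addr0. Qed.

Lemma linmapD A C : L (A + C) = L A + L C.
Proof. by have := linL 1 A C; rewrite !scale1r. Qed.

Lemma linmap_sum (I : finType) (F : I -> Mat) : L (\sum_i F i) = \sum_i L (F i).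
Proof. exact: (big_morph _ linmapD linmap0). Qed.

End LinearMaps.

Lemma ord2P (i : 'I_2) : i = 0 \/ i = 1.
Proof. by case: i => [[|[|//]] ?]; [left | right]; apply/val_inj. Qed.

Lemma lift0_ord1 : lift ord0 (ord0 : 'I_1) = 1 :> 'I_2.
Proof. exact/val_inj. Qed.

Lemma mxtrace2 (A : Mat) : \tr A = A 0 0 + A 1 1.
Proof. by rewrite /mxtrace !big_ord_recl big_ord0 lift0_ord1 addr0. Qed.

Lemma mulmx2E (A C : Mat) i j : (A *m C) i j = A i 0 * C 0 j + A i 1 * C 1 j.
Proof. by rewrite !mxE !big_ord_recl big_ord0 lift0_ord1 addr0. Qed.

Lemma mxtrace_PZ (A : Mat) : \tr (PZ *m A) = A 0 0 - A 1 1.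
Proof. rewrite mxtrace2 !mulmx2E !mxE /=; ring. Qed.

Lemma two_neq0 : (2 : algC) != 0. Proof. by rewrite pnatr_eq0. Qed.

Lemma mulCi_i (x : algC) : 'i * x / 2 * 'i = - (x / 2).
Proof. by rewrite -mulN1r -sqrCi mulrC !mulrA expr2. Qed.

Lemma mulCi_Ni (x : algC) : 'i * x / 2 * - 'i = x / 2.
Proof. by rewrite mulrN mulCi_i opprK. Qed.

(* Splits a 2x2 matrix identity into its four entries, with [2 != 0] in
   context for [field]. *)
Ltac mx2_ext :=
  apply/matrixP; let i := fresh "i" in let j := fresh "j" in
  move=> i j; have := two_neq0;
  case: (ord2P i) => ->; case: (ord2P j) => ->;
  rewrite !(mulmx2E, mxE) /= ?mulCi_i ?mulCi_Ni => ?.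

Lemma pauli_decomp (A : Mat) :
  A = ((A 0 0 + A 1 1) / 2) *: 1%:M + ((A 0 1 + A 1 0) / 2) *: PX
    + ('i * (A 0 1 - A 1 0) / 2) *: PY + ((A 0 0 - A 1 1) / 2) *: PZ.
Proof. by mx2_ext; field. Qed.

(* The Z-coefficient of A in the Pauli basis is tr (Z A) / 2. *)
Definition zscale (s : algC) (A : Mat) : Mat :=
  A + ((s - 1) * (\tr (PZ *m A) / 2)) *: PZ.

Lemma linmap_zscale s : linmap (zscale s).
Proof. by move=> a A C; rewrite /zscale !mxtrace_PZ; mx2_ext; field. Qed.

Lemma zscale_unique (B : Mat -> Mat) s :
  linmap B -> B 1%:M = 1%:M -> B PX = PX -> B PY = PY -> B PZ = s *: PZ ->
  B =1 zscale s.
Proof.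
move=> linB B1 BX BY BZ A.
rewrite {1}(pauli_decomp A) !(linmapD linB) !(linmapZ linB) B1 BX BY BZ.
by rewrite /zscale mxtrace_PZ; mx2_ext; field.
Qed.

Lemma mxtrace_zscale s A : \tr (zscale s A) = \tr A.
Proof. rewrite /zscale mxtrace_PZ !mxtrace2 !mxE /=; ring. Qed.

Lemma mxtrace_PZ_zscale s A : \tr (PZ *m zscale s A) = s * \tr (PZ *m A).
Proof. by rewrite /zscale !mxtrace_PZ !mxE /=; have := two_neq0 => ?; field. Qed.

Lemma chX_zscale x s A : chX x (zscale s A) = zscale s (chX x A).
Proof. by case: x; rewrite /chX // /zscale !mxtrace_PZ; mx2_ext; field. Qed.

Lemma chZ_zscale a s A : chZ a (zscale s A) = zscale s (chZ a A).
Proof. by case: a; rewrite /chZ // /zscale !mxtrace_PZ; mx2_ext; field. Qed.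

Section Conjugation.
Variables (L Linv : Mat -> Mat) (M : bool -> Mat -> Mat).
Hypotheses (linL : linmap L) (LK : cancel L Linv) (LinvK : cancel Linv L).
Hypotheses (chX_L : forall x A, chX x (L A) = L (chX x A))
           (chZ_L : forall a A, chZ a (L A) = L (chZ a A)).

Let M' k A := L (M k (Linv A)).

Lemma commute_inv (f : Mat -> Mat) :
  (forall A, f (L A) = L (f A)) -> forall A, Linv (f A) = f (Linv A).
Proof. by move=> fL A; rewrite -{1}[A]LinvK fL LK. Qed.

Lemma rc_conj k A : rc M' k A = L (rc M k (Linv A)).
Proof.
rewrite /rc (linmapZ linL) !(linmap_sum linL); congr (_ *: _).
apply: eq_bigr => a _; rewrite (linmap_sum linL); apply: eq_bigr => b _.
rewrite (linmap_sum linL); apply: eq_bigr => x _.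
by rewrite /M' !(commute_inv (chX_L x), commute_inv (chZ_L b)) chZ_L chX_L.
Qed.

Lemma run_conj ks rho : run M' (L rho) ks = L (run M rho ks).
Proof. by elim: ks rho => [|k ks IH] rho //=; rewrite rc_conj LK IH. Qed.

Lemma gnu01_conj s :
  (forall A, \tr (PZ *m L A) = s * \tr (PZ *m A)) -> L 1%:M = 1%:M ->
  gnu M' false true = s * gnu M false true.
Proof.
move=> trZL L1; rewrite /gnu mulrCA !mulr_sumr; apply: eq_bigr => k _.
by rewrite /M' /= -{1}L1 LK trZL; congr (_ * _); exact: mulrCA.
Qed.

Lemma gnu10_conj s :
  (forall k, linmap (M k)) -> (forall A, \tr (L A) = \tr A) -> L PZ = s *: PZ ->
  s * gnu M' true false = gnu M true false.
Proof.
move=> linM trL LZ; rewrite /gnu mulrCA !mulr_sumr; apply: eq_bigr => k _.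
have sLinvZ : s *: Linv PZ = PZ.
  by apply: (can_inj LK); rewrite (linmapZ linL) LinvK LZ.
rewrite /M' /= !mul1mx trL [s * _]mulrCA -[s * _]mxtraceZ.
by rewrite -(linmapZ (linM k)) sLinvZ.
Qed.

End Conjugation.

Theorem mainTheorem6
  (M : bool -> 'M[algC]_2 -> 'M[algC]_2) (rho : 'M[algC]_2)
  (B Binv : 'M[algC]_2 -> 'M[algC]_2) :
  instrument M -> density rho ->
  gnu M false true != 0 -> gnu M true false != 0 ->
  let r := gnu M true false / gnu M false true in
  linmap B -> B 1%:M = 1%:M -> B PX = PX -> B PY = PY -> B PZ = r *: PZ ->
  cancel B Binv -> cancel Binv B ->
  let M' := fun k A => B (M k (Binv A)) in
  [/\ gnu M' false true = gnu M true false,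
      gnu M' true false = gnu M false true &
      forall (m : nat) (ks : m.-tuple bool), (1 <= m)%N ->
        \tr (run M' (B rho) ks) = \tr (run M rho ks)].
Proof.
move=> [linM _] _ g01 g10 r linB B1 BX BY BZ BK BinvK M'.
have r0 : r != 0 by rewrite mulf_neq0 // invr_eq0.
have Bz := zscale_unique linB B1 BX BY BZ.
have trB A : \tr (B A) = \tr A by rewrite Bz mxtrace_zscale.
have trZB A : \tr (PZ *m B A) = r * \tr (PZ *m A) by rewrite Bz mxtrace_PZ_zscale.
have chX_B x A : chX x (B A) = B (chX x A) by rewrite !Bz chX_zscale.
have chZ_B a A : chZ a (B A) = B (chZ a A) by rewrite !Bz chZ_zscale.
split.
- by rewrite (gnu01_conj M BK trZB B1) /r divfK.
- apply: (mulfI r0).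
  by rewrite (gnu10_conj linB BK BinvK (fun k => proj1 (linM k)) trB BZ) /r divfK.
- by move=> m ks _; rewrite (run_conj M linB BK BinvK chX_B chZ_B); exact: trB.
Qed.
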